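(* Let $(F_k)_{k\geq1}$ be a sequence of cumulative distribution functions on $\mathbb{R}$ and $F$ a cumulative distribution function such that $F_k(x)^k\to F(x)$ as $k\to\infty$ at every point $x$ where $F$ is continuous. Then at every such $x$, $F_k^{\Box\!\vee k}(x)\to\max(0,1+\log F(x))$ as $k\to\infty$.
   Context: For cumulative distribution functions $F,G$, the free upper extremal convolution is $F\,\Box\!\vee\, G=\max(0,F+G-1)$ (pointwise), and $F^{\Box\!\vee k}=F\,\Box\!\vee\cdots\Box\!\vee\, F$ ($k$ factors, taken iteratively). Convention: $\log 0=-\infty$, so $\max(0,1+\log 0)=0$. *)

From HB Require Import structures.
From mathcomp Require Import all_boot all_order all_algebra.
From mathcomp Require Import all_classical all_reals all_analysis.
Set Implicit Arguments. Unset Strict Implicit. Unset Printing Implicit Defensive.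
Import Order.TTheory GRing.Theory Num.Theory.
Import numFieldNormedType.Exports.
Local Open Scope ring_scope.
Local Open Scope classical_set_scope.

Definition is_cdf (R : realType) (F : R -> R) : Prop :=
  {homo F : x y / x <= y} /\
  (forall x : R, F y @[y --> x^'+] --> F x) /\
  (F x @[x --> -oo] --> (0 : R)) /\
  (F x @[x --> +oo] --> (1 : R)).

Definition fmaxconv (R : realType) (F G : R -> R) : R -> R :=
  fun x => Num.max 0 (F x + G x - 1).

(* fmaxpow F k = F box-vee ... box-vee F with k factors (k >= 1),
   taken iteratively: F^{k+1} = F^{k} box-vee F.  (k = 0 returns F; unused.) *)
Fixpoint fmaxpow (R : realType) (F : R -> R) (k : nat) : R -> R :=
  match k with
  | 0%N => F
  | 1%N => F
  | k'.+1 => fmaxconv (fmaxpow F k') F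
  end.

(* max(0, 1 + log y) with the convention log 0 = -oo (so the value is 0 at y = 0).
   For y in [0,1] (values of a cdf) this is the intended quantity. *)
Definition onePlusLogPos (R : realType) (y : R) : R :=
  if y == 0 then 0 else Num.max 0 (1 + ln y).

From HB Require Import structures.
From mathcomp Require Import all_boot all_order all_algebra.
From mathcomp Require Import all_classical all_reals all_analysis.
From mathcomp Require Import ring lra.
Set Implicit Arguments. Unset Strict Implicit. Unset Printing Implicit Defensive.
Import Order.TTheory GRing.Theory Num.Theory.
Import numFieldNormedType.Exports.
Local Open Scope ring_scope.
Local Open Scope classical_set_scope.

(* For values in [0, 1], [k] free convolutions collapse to the closed form
   [max 0 (1 - k (1 - y))] with [y = F_k(x)].  If [y^k -> L > 0] then
   [k ln y -> ln L], and the sandwich [y (-ln y) <= 1 - y <= -ln y] shows that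
   [k (1 - y)] has the same limit as [-k ln y], namely [-ln L].  If [L = 0],
   Bernoulli's inequality squeezes the closed form between [0] and [y^k]. *)

Section CdfBounds.
Variables (R : realType) (G : R -> R).
Hypothesis G_nondecr : {homo G : x y / x <= y}.

Lemma nondecreasing_cvgNy_ge (l : R) : G t @[t --> -oo] --> l -> forall x, l <= G x.
Proof.
move=> Gl x; apply: ler_cvg_to Gl (cvg_cst (G x)) _.
by exists x; split=> [|t /ltW tx]; [exact: num_real | exact: G_nondecr].
Qed.

Lemma nondecreasing_cvgy_le (l : R) : G t @[t --> +oo] --> l -> forall x, G x <= l.
Proof.
move=> Gl x; apply: ler_cvg_to (cvg_cst (G x)) Gl _.
by exists x; split=> [|t /ltW xt]; [exact: num_real | exact: G_nondecr].
Qed.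

End CdfBounds.

Lemma cdf_in01 (R : realType) (G : R -> R) (x : R) : is_cdf G -> 0 <= G x <= 1.
Proof.
move=> [G_nondecr [_ [G_Ny G_y]]].
by rewrite (nondecreasing_cvgNy_ge G_nondecr G_Ny) (nondecreasing_cvgy_le G_nondecr G_y).
Qed.

Lemma fmaxpowE (R : realType) (G : R -> R) (x : R) (k : nat) :
  0 <= G x <= 1 -> (0 < k)%N ->
  fmaxpow G k x = Num.max 0 (1 - k%:R * (1 - G x)).
Proof.
move=> /andP[G0 G1]; elim: k => [//|[|k] IH _].
  by rewrite /= mul1r opprB addrC subrK max_r.
change (fmaxconv (fmaxpow G k.+1) G x = Num.max 0 (1 - k.+2%:R * (1 - G x))).
rewrite /fmaxconv IH // -[k.+2]addn1 natrD.
have t0 : 0 <= k.+1%:R * (1 - G x) by rewrite mulr_ge0 // subr_ge0.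
case: (leP 0 (1 - k.+1%:R * (1 - G x))) => h.
  by congr (Num.max _ _); ring.
by rewrite max_l; [rewrite max_l; nra | lra].
Qed.

Lemma bernoulli_ler (R : realDomainType) (x : R) (n : nat) :
  -1 <= x -> 1 + n%:R * x <= (1 + x) ^+ n.
Proof.
move=> x_ge; have x1 : 0 <= 1 + x by lra.
elim: n => [|n IH]; first by rewrite mul0r addr0 expr0.
rewrite exprSr -addn1 natrD; apply: le_trans (ler_wpM2r x1 IH).
have : 0 <= n%:R * x * x by rewrite -mulrA mulr_ge0 // -expr2 sqr_ge0.
lra.
Qed.

Lemma cvg_max0 (R : realType) (u : nat -> R) (l : R) :
  u @ \oo --> l -> (fun k => Num.max 0 (u k)) @ \oo --> Num.max 0 l.
Proof.
move=> ul; apply: (cvg_comp _ _ ul).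
by apply: (@continuous_max _ R^o (cst 0) id l); [exact: cvg_cst | exact: cvg_id].
Qed.

Lemma ln_le_subr1 (R : realType) (z : R) : 0 < z -> ln z <= z - 1.
Proof.
by move=> z0; have := @le_ln1Dx R (z - 1); rewrite [1 + _]addrC subrK; apply; lra.
Qed.

Lemma ln_ge_1BV (R : realType) (z : R) : 0 < z -> 1 - z^-1 <= ln z.
Proof.
move=> z0; have := ln_le_subr1 (_ : 0 < z^-1); rewrite invr_gt0 => /(_ z0).
by rewrite lnV ?posrE //; lra.
Qed.

Section PowerLimit.
Variables (R : realType) (y : nat -> R) (L : R).
Hypothesis y01 : \forall k \near \oo, 0 <= y k <= 1.
Hypothesis yL : (fun k => y k ^+ k) @ \oo --> L.

Lemma cvg_expr_ge0 : 0 <= L.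
Proof.
apply: ler_cvg_to (cvg_cst 0) yL _.
near=> k; have /andP[y0 _] : 0 <= y k <= 1 by near: k; exact: y01.
exact: exprn_ge0.
Unshelve. all: end_near.
Qed.

Lemma cvg_max0_1Bmul0 : L = 0 ->
  (fun k => Num.max 0 (1 - k%:R * (1 - y k))) @ \oo --> 0.
Proof.
move=> L0; have yL0 := yL; rewrite L0 in yL0.
apply: (squeeze_cvgr _ (cvg_cst 0) yL0).
near=> k; have /andP[y0 y1] : 0 <= y k <= 1 by near: k; exact: y01.
rewrite le_max lexx ge_max exprn_ge0 //=.
have := @bernoulli_ler _ (y k - 1) k; rewrite [1 + (_ - 1)]addrC subrK.
rewrite -opprB mulrN; apply; lra.
Unshelve. all: end_near.
Qed.

Section PositiveLimit.
Hypothesis L_gt0 : 0 < L.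

Lemma near_y_gt0 : \forall k \near \oo, 0 < y k /\ (0 < k)%N.
Proof.
have yk_gt0 : \forall k \near \oo, 0 < y k ^+ k by exact: cvgr_gt yL _ L_gt0.
near=> k; have /andP[y0 _] : 0 <= y k <= 1 by near: k; exact: y01.
have yk0 : 0 < y k ^+ k by near: k; exact: yk_gt0.
have k0 : (0 < k)%N by near: k; exists 1%N.
split=> //; rewrite lt_neqAle y0 andbT eq_sym; apply: contraTneq yk0 => ->.
by rewrite expr0n gtn_eqF // ltxx.
Unshelve. all: end_near.
Qed.

Lemma cvg_mulr_lnN : (fun k => k%:R * - ln (y k)) @ \oo --> - ln L.
Proof.
apply: cvg_trans (cvgN (cvg_comp _ _ yL (continuous_ln L_gt0))).
apply: near_eq_cvg; near=> k.
have [y0 _] : 0 < y k /\ (0 < k)%N by near: k; exact: near_y_gt0.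
by rewrite !fctE lnXn // mulrN mulr_natl.
Unshelve. all: end_near.
Qed.

Lemma cvg_y1 : y @ \oo --> (1 : R).
Proof.
have k_inv : (fun k : nat => (k%:R : R)^-1) @ \oo --> 0.
  apply/gtr0_cvgV0; last exact: cvgr_idn.
  by near=> k; rewrite ltr0n; near: k; exists 1%N.
have lnN_k : (fun k => - (k%:R * - ln (y k) * k%:R^-1)) @ \oo --> 0.
  by rewrite -oppr0 -(mulr0 (- ln L)); exact: cvgN (cvgM cvg_mulr_lnN k_inv).
apply/subr_cvg0; apply: (squeeze_cvgr _ lnN_k (cvg_cst 0)).
near=> k; have [y0 k0] : 0 < y k /\ (0 < k)%N by near: k; exact: near_y_gt0.
have /andP[_ y1] : 0 <= y k <= 1 by near: k; exact: y01.
rewrite subr_le0 y1 andbT mulrAC mulfV ?pnatr_eq0 -?lt0n // mul1r.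
by have := ln_le_subr1 y0; lra.
Unshelve. all: end_near.
Qed.

Lemma cvg_mulr_1B : (fun k => k%:R * (1 - y k)) @ \oo --> - ln L.
Proof.
have lnN_y : (fun k => k%:R * - ln (y k) * y k) @ \oo --> - ln L.
  by rewrite -(mulr1 (- ln L)); exact: cvgM cvg_mulr_lnN cvg_y1.
apply: (squeeze_cvgr _ lnN_y cvg_mulr_lnN); near=> k.
have [y0 _] : 0 < y k /\ (0 < k)%N by near: k; exact: near_y_gt0.
have k0 : 0 <= k%:R :> R by [].
have := ln_le_subr1 y0; have := ln_ge_1BV y0.
rewrite -(@ler_pM2l _ (y k)) // mulrBr mulr1 mulfV ?gt_eqF // => h1 h2.
by rewrite -mulrA !ler_wpM2l //; lra.
Unshelve. all: end_near.
Qed.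

End PositiveLimit.

Lemma cvg_max0_1Bmul :
  (fun k => Num.max 0 (1 - k%:R * (1 - y k))) @ \oo --> onePlusLogPos L.
Proof.
rewrite /onePlusLogPos; have [L0|L_neq0] := eqVneq L 0.
  exact: cvg_max0_1Bmul0.
have L_gt0 : 0 < L by rewrite lt_neqAle eq_sym L_neq0 cvg_expr_ge0.
apply: cvg_max0; rewrite -[ln L]opprK.
exact: cvgB (cvg_cst (1 : R)) (cvg_mulr_1B L_gt0).
Qed.

End PowerLimit.

Theorem mainTheorem7 (R : realType) (Fs : nat -> R -> R) (F : R -> R) :
  (forall k : nat, (0 < k)%N -> is_cdf (Fs k)) ->
  is_cdf F ->
  (forall x : R, {for x, continuous F} ->
     (fun k : nat => Fs k x ^+ k) @ \oo --> F x) ->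
  forall x : R, {for x, continuous F} ->
    (fun k : nat => fmaxpow (Fs k) k x) @ \oo --> onePlusLogPos (F x).
Proof.
move=> Fs_cdf _ Fs_F x Fx_cont.
have Fs01 : \forall k \near \oo, 0 <= Fs k x <= 1.
  by exists 1%N => // k k0; exact/cdf_in01/Fs_cdf.
apply: cvg_trans (cvg_max0_1Bmul Fs01 (Fs_F x Fx_cont)).
apply: near_eq_cvg; near=> k.
have k0 : (0 < k)%N by near: k; exists 1%N.
by rewrite fmaxpowE //; apply/cdf_in01/Fs_cdf.
Unshelve. all: end_near.
Qed.
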